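(* Let $\mathcal{G}^{c}=(\mathbb{C},\mathbb{E}^{c})$ be a C-DMG over DMGs and let $\mathbb{C}_X,\mathbb{C}_Y,\mathbb{C}_W$ be pairwise disjoint subsets of $\mathbb{C}$. If $\mathbb{C}_X$ and $\mathbb{C}_Y$ are $\sigma$-separated by $\mathbb{C}_W$ in $\mathcal{G}^{c}$, then in every DMG $\mathcal{G}=(\mathbb{V},\mathbb{E})$ compatible with $\mathcal{G}^{c}$, the sets $X=\bigcup_{C\in\mathbb{C}_X}C$ and $Y=\bigcup_{C\in\mathbb{C}_Y}C$ are $\sigma$-separated by $W=\bigcup_{C\in\mathbb{C}_W}C$.
   Context: A directed mixed graph (DMG) $\mathcal{G}=(\mathbb{V},\mathbb{E})$ has directed edges $\to$ and bidirected edges $\leftrightarrow$, cycles allowed; the DMGs considered are those induced by input/output structural causal models (ioSCMs, Forré–Mooij 2020): vertices are the endogenous and input variables, $U\to V$ if $U$ is an argument of the causal mechanism of $V$, and $U\leftrightarrow V$ if some latent variable is a parent of both. A C-DMG over DMGs $\mathcal{G}^c=(\mathbb{C},\mathbb{E}^c)$ is obtained from such a DMG $\mathcal{G}=(\mathbb{V},\mathbb{E})$ as follows: $\mathbb{C}$ is a partition of $\mathbb{V}$ into nonempty clusters, and for all $C_i,C_j\in\mathbb{C}$ (possibly equal) the edge $C_i\to C_j$ (resp. $C_i\leftrightarrow C_j$) is in $\mathbb{E}^c$ iff there exist $V_i\in C_i,V_j\in C_j$ with $V_i\to V_j$ (resp. $V_i\leftrightarrow V_j$) in $\mathbb{E}$;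 such $\mathcal{G}$ is called compatible with $\mathcal{G}^c$. In any such graph, ancestors and descendants include the vertex itself, and the strongly connected component of $V$ is $\mathrm{Sc}(V)=\mathrm{Anc}(V)\cap\mathrm{Desc}(V)$. Write $A\mathbin{*\!\!\to} B$ for an edge $A\to B$ or $A\leftrightarrow B$, and $A\mathbin{\leftarrow\!\!*} B$ for $A\leftarrow B$ or $A\leftrightarrow B$. A walk $\langle V_1,\dots,V_n\rangle$ (a sequence of vertices with consecutive vertices joined by a specified edge) is $\sigma$-blocked by a set $W$ if: (1) $V_1\in W$ or $V_n\in W$; or (2) for some $1<i<n$, $V_{i-1}\mathbin{*\!\!\to}V_i\mathbin{\leftarrow\!\!*}V_{i+1}$ on the walk and $V_i\notin W$; or (3) for some $1<i<n$, $V_{i-1}\leftarrow V_i\mathbin{\leftarrow\!\!*}V_{i+1}$ on the walk and $V_i\in W\setminus \mathrm{Sc}(V_{i-1})$; or (4) for some $1<i<n$, $V_{i-1}\mathbin{*\!\!\to}V_i\to V_{i+1}$ on the walk and $V_i\in W\setminus\mathrm{Sc}(V_{i+1})$; or (5) for some $1<i<n$, $V_{i-1}\leftarrow V_i\to V_{i+1}$ on the walk and $V_i\in W\setminus(\mathrm{Sc}(V_{i-1})\cap\mathrm{Sc}(V_{i+1}))$. For disjoint vertex sets $X,Y,W$, $W$ $\sigma$-separates $X$ and $Y$ if every walk from a vertex of $X$ to a vertex of $Y$ is $\sigma$-blocked by $W$. These notions apply to both DMGs and C-DMGs. *)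

From mathcomp Require Import all_boot.
Set Implicit Arguments. Unset Strict Implicit. Unset Printing Implicit Defensive.

(* The kind of edge joining consecutive vertices a, b of a walk:
   Fwd : a -> b,  Bwd : a <- b,  Bi : a <-> b. *)
Inductive ekind := Fwd | Bwd | Bi.

Section Graph.
Variables (V : finType) (dir bi : rel V).

(* strongly connected component: Anc(v) ∩ Desc(v) (reflexive) *)
Definition Sc (v : V) : {set V} :=
  [set u | connect dir u v && connect dir v u].

Definition edge_ok (a : V) (e : ekind) (b : V) : bool :=
  match e with Fwd => dir a b | Bwd => dir b a | Bi => bi a b end.

(* a walk is a start vertex x and a list of (edge kind, next vertex) *)
Fixpoint is_walk (a : V) (s : seq (ekind * V)) : bool :=
  if s is (e, b) :: s' then edge_ok a e b && is_walk b s' else true.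

Definition walk_end (x : V) (s : seq (ekind * V)) : V := last x (map snd s).

(* arrowhead at b on edge (a e1 b) / on edge (b e2 c) *)
Definition head_in (e1 : ekind) := if e1 is Bwd then false else true.
Definition head_out (e2 : ekind) := if e2 is Fwd then false else true.

(* conditions (2)-(5) at the inner vertex b of a ... a e1 b e2 c ... *)
Definition triple_blocked (W : {set V}) (a : V) (e1 : ekind) (b : V)
    (e2 : ekind) (c : V) : bool :=
  [|| (head_in e1 && head_out e2 && (b \notin W)),
      (~~ head_in e1 && head_out e2 && (b \in W :\: Sc a)),
      (head_in e1 && ~~ head_out e2 && (b \in W :\: Sc c)) |
      (~~ head_in e1 && ~~ head_out e2 && (b \in W :\: (Sc a :&: Sc c)))].

Fixpoint inner_blocked (W : {set V}) (a : V) (s : seq (ekind * V)) : bool :=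
  match s with
  | (e1, b) :: (((e2, c) :: _) as s') =>
      triple_blocked W a e1 b e2 c || inner_blocked W b s'
  | _ => false
  end.

Definition sigma_blocked (W : {set V}) (x : V) (s : seq (ekind * V)) : bool :=
  [|| x \in W, walk_end x s \in W | inner_blocked W x s].

Definition sigma_separated (X Y W : {set V}) : Prop :=
  forall (x : V) (s : seq (ekind * V)),
    x \in X -> walk_end x s \in Y -> is_walk x s -> sigma_blocked W x s.

End Graph.

(* A DMG (dir, bi) on V together with a cluster map cl : V -> C is compatible
   with the C-DMG (dirC, biC) on C: the clusters cl^-1(Ci) form a partition of
   V into nonempty sets (cl surjective), and cluster edges are exactly the
   induced ones (cluster self-loops included). *)
Definition compatible (V C : finType) (dir bi : rel V) (cl : V -> C)
    (dirC biC : rel C) : Prop :=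
  (forall Ci : C, exists v : V, cl v = Ci) /\
  (forall Ci Cj : C,
      dirC Ci Cj = [exists u, exists v, [&& cl u == Ci, cl v == Cj & dir u v]]) /\
  (forall Ci Cj : C,
      biC Ci Cj = [exists u, exists v, [&& cl u == Ci, cl v == Cj & bi u v]]).

Definition cl_union (V C : finType) (cl : V -> C) (CS : {set C}) : {set V} :=
  [set v | cl v \in CS].

From mathcomp Require Import all_boot.
Set Implicit Arguments. Unset Strict Implicit. Unset Printing Implicit Defensive.

(* The cluster map cl is a homomorphism of mixed graphs, so it sends a walk of
   the DMG to a walk of the C-DMG with the same edge marks, and sends the
   endpoints into the corresponding sets of clusters.  A position blocking the
   image walk also blocks the original one: colliders only depend on the edge
   marks, membership in W is read off the clusters, and since cl maps Sc(a)
   into Sc(cl a), a vertex whose cluster lies outside Sc(cl a) lies outside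
   Sc(a). *)

Lemma connect_homo (T T' : finType) (e : rel T) (e' : rel T') (f : T -> T') :
  {homo f : x y / e x y >-> e' x y} ->
  {homo f : x y / connect e x y >-> connect e' x y}.
Proof.
move=> f_homo x _ /connectP[p e_p ->].
by apply/connectP; exists (map f p); [exact: homo_path f_homo e_p | rewrite last_map].
Qed.

Lemma homo_induced (V C : finType) (cl : V -> C) (r : rel V) (rC : rel C) :
  (forall Ci Cj, rC Ci Cj = [exists u, exists v, [&& cl u == Ci, cl v == Cj & r u v]]) ->
  {homo cl : u v / r u v >-> rC u v}.
Proof.
move=> rCE u v ruv; rewrite rCE.
by apply/existsP; exists u; apply/existsP; exists v; rewrite !eqxx.
Qed.

Section ClusterMap.
Variables (V C : finType) (dir bi : rel V) (dirC biC : rel C) (cl : V -> C).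
Hypothesis cl_dir : {homo cl : u v / dir u v >-> dirC u v}.
Hypothesis cl_bi : {homo cl : u v / bi u v >-> biC u v}.

Definition map_walk (s : seq (ekind * V)) : seq (ekind * C) :=
  [seq (p.1, cl p.2) | p <- s].

Lemma mem_Sc_map a b : b \in Sc dir a -> cl b \in Sc dirC (cl a).
Proof. by rewrite !inE => /andP[ba ab]; rewrite !(connect_homo cl_dir). Qed.

Lemma is_walk_map x s : is_walk dir bi x s -> is_walk dirC biC (cl x) (map_walk s).
Proof.
elim: s x => //= -[e b] s IHs x /andP[xb /IHs ->]; rewrite andbT.
by case: e xb => /=; [exact: cl_dir | exact: cl_dir | exact: cl_bi].
Qed.

Lemma walk_end_map x s : walk_end (cl x) (map_walk s) = cl (walk_end x s).
Proof. by rewrite /walk_end -!map_comp; elim: s x => //= -[e b] s IHs x. Qed.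

Lemma mem_cl_union (W : {set C}) v : (v \in cl_union cl W) = (cl v \in W).
Proof. by rewrite inE. Qed.

Lemma triple_blocked_preim (W : {set C}) a e1 b e2 c :
  triple_blocked dirC W (cl a) e1 (cl b) e2 (cl c) ->
  triple_blocked dir (cl_union cl W) a e1 b e2 c.
Proof.
have notSc a' : cl b \notin Sc dirC (cl a') -> b \notin Sc dir a'.
  exact/contra/mem_Sc_map.
rewrite /triple_blocked !in_setD !in_setI mem_cl_union.
case: e1; case: e2 => //=; rewrite ?andbF ?andbT ?orbF //=.
all: case/andP=> + ->; rewrite andbT ?negb_and.
all: by [move/notSc | case/orP=> /notSc ->; rewrite ?orbT].
Qed.

Lemma inner_blocked_preim (W : {set C}) a s :
  inner_blocked dirC W (cl a) (map_walk s) -> inner_blocked dir (cl_union cl W) a s.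
Proof.
elim: s a => // -[e1 b] [//|[e2 c] s] IHs a /= /orP[/triple_blocked_preim -> //|].
by move/IHs=> blocked; apply/orP; right.
Qed.

Lemma sigma_blocked_preim (W : {set C}) x s :
  sigma_blocked dirC W (cl x) (map_walk s) -> sigma_blocked dir (cl_union cl W) x s.
Proof.
rewrite /sigma_blocked !mem_cl_union walk_end_map.
by case/or3P=> [-> | -> | /inner_blocked_preim ->]; rewrite ?orbT.
Qed.

Lemma sigma_separated_preim (X Y W : {set C}) :
  sigma_separated dirC biC X Y W ->
  sigma_separated dir bi (cl_union cl X) (cl_union cl Y) (cl_union cl W).
Proof.
move=> sepC x s; rewrite !mem_cl_union => Xx Yend walk_s.
apply: sigma_blocked_preim; apply: sepC => //.
- by rewrite walk_end_map.
- exact: is_walk_map.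
Qed.

End ClusterMap.

Theorem theorem1 (C : finType) (dirC biC : rel C) (CX CY CW : {set C}) :
  [disjoint CX & CY] -> [disjoint CX & CW] -> [disjoint CY & CW] ->
  sigma_separated dirC biC CX CY CW ->
  forall (V : finType) (dir bi : rel V) (cl : V -> C),
    symmetric bi ->
    compatible dir bi cl dirC biC ->
    sigma_separated dir bi (cl_union cl CX) (cl_union cl CY) (cl_union cl CW).
Proof.
move=> _ _ _ sepC V dir bi cl _ [_ [dirCE biCE]].
exact: sigma_separated_preim (homo_induced dirCE) (homo_induced biCE) _ _ _ sepC.
Qed.
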